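(* Let $\alpha(n)$ be a sequence of positive reals and fix a positive integer $d$. Suppose there are real sequences $R(n)$, $\delta(n)>0$ and $C_r(n)$ ($0\le r\le d$) such that $\delta(n)\to0$, $C_r(n)\to c_r$, and, as $n\to\infty$, $$\frac{\alpha(n+j)}{\alpha(n)R(n)^j}=\sum_{r=0}^dC_r(n)\delta(n)^rj^r+o(\delta(n)^d)$$ for $j=1,\dots,d$. Let $R^*(n)$ and $\delta^*(n)>0$ be real sequences with $$R^*(n)=R(n)(1+o(\delta(n))),\qquad \delta^*(n)=\delta(n)(1+o(1))\qquad(n\to\infty).$$ Then there exist real sequences $C^*_r(n)$ with $C^*_r(n)\to c_r$ for each $r$, such that $$\frac{\alpha(n+j)}{\alpha(n)R^*(n)^j}=\sum_{r=0}^dC^*_r(n)\delta^*(n)^rj^r+o(\delta^*(n)^d)$$ as $n\to\infty$, for $j=1,\dots,d$. *)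

From Stdlib Require Export Reals.
Open Scope R_scope.

Definition little_o (u v : nat -> R) : Prop :=
  forall eps : R, 0 < eps ->
    exists N : nat, forall n : nat, (N <= n)%nat -> Rabs (u n) <= eps * Rabs (v n).

Definition expansion (C : nat -> nat -> R) (delta : nat -> R) (d n j : nat) : R :=
  sum_f_R0 (fun r => C r n * delta n ^ r * INR j ^ r) d.

(* Write R'(n) = R(n) (1 + e(n)) with e = o(delta), delta'(n) = delta(n) (1 + f(n))
   with f -> 0, and put g = 1/(1+e) - 1 = o(delta').  The new left-hand side is the
   old one multiplied by (1+g)^j, and delta = u delta' with u = 1/(1+f) -> 1.

   For j <= d one has
   (1+g)^j = sum_{i<=d} Q_i(j) g^i with Q_i(j) = binom(j,i) ([binom_poly]), and Q_{i+1}(j) g^{i+1}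
   = Q_i(j) g^i (a + b D' j) with a, b -> 0; hence every term i >= 1 contributes
   only vanishing coefficients, and multiplying by (1+g)^j keeps the limits c_r. *)

From Stdlib Require Import Reals Lra Lia.
Open Scope R_scope.

(** Convergence of real sequences *)

Lemma cv_const (l : R) : Un_cv (fun _ => l) l.
Proof.
  intros eps Heps. exists 0%nat. intros n _.
  unfold R_dist. rewrite Rminus_diag, Rabs_R0. lra.
Qed.

Lemma cv_ext (u v : nat -> R) (l : R) :
  (forall n, u n = v n) -> Un_cv u l -> Un_cv v l.
Proof.
  intros E H eps Heps. destruct (H eps Heps) as [N HN].
  exists N. intros n Hn. rewrite <- E. auto.
Qed.

(* Rewrites the limit, so that it can be brought to the shape produced by
   [CV_plus], [CV_mult], ... *)
Lemma cv_lim_eq (u : nat -> R) (l l' : R) : l = l' -> Un_cv u l -> Un_cv u l'.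
Proof. now intros ->. Qed.

Lemma cv_bounded (u : nat -> R) (l : R) :
  Un_cv u l -> exists M, forall n, Rabs (u n) <= M.
Proof.
  intros H.
  destruct (cauchy_bound _ (CV_Cauchy _ (exist _ _ (cv_cvabs _ _ H)))) as [M HM].
  exists M. intros n. apply HM. now exists n.
Qed.

Lemma cv_pow (u : nat -> R) (l : R) (k : nat) :
  Un_cv u l -> Un_cv (fun n => u n ^ k) (l ^ k).
Proof.
  intros H. induction k as [|k IH]; simpl.
  - apply cv_const.
  - now apply CV_mult.
Qed.

Lemma cv_inv_one_plus (t : nat -> R) :
  Un_cv t 0 -> Un_cv (fun n => / (1 + t n)) 1.
Proof.
  intros H eps Heps.
  destruct (H (Rmin (1/2) (eps/2))) as [N HN]; [apply Rmin_pos; lra|].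
  exists N. intros n Hn. specialize (HN n Hn).
  unfold R_dist in *. rewrite Rminus_0_r in HN.
  pose proof (Rmin_l (1/2) (eps/2)). pose proof (Rmin_r (1/2) (eps/2)).
  pose proof (Rle_abs (t n)). pose proof (Rle_abs (- t n)). rewrite Rabs_Ropp in *.
  assert (Hpos : 1/2 < 1 + t n) by lra.
  assert (Hinv : 0 < / (1 + t n) < 2).
  { split; [apply Rinv_0_lt_compat; lra|].
    replace 2 with (/ (1/2)) by field. apply Rinv_lt_contravar; lra. }
  replace (/ (1 + t n) - 1) with (- t n * / (1 + t n)) by (field; lra).
  rewrite Rabs_mult, Rabs_Ropp, (Rabs_pos_eq (/ (1 + t n))) by lra.
  pose proof (Rabs_pos (t n)).
  apply Rle_lt_trans with (Rabs (t n) * 2); [apply Rmult_le_compat_l|]; lra.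
Qed.

(** Little-o calculus *)

Lemma lo_ext_ev (u v w : nat -> R) :
  (exists N, forall n, (N <= n)%nat -> u n = v n) -> little_o u w -> little_o v w.
Proof.
  intros [N0 E] H eps Heps. destruct (H eps Heps) as [N HN].
  exists (max N N0). intros n Hn. rewrite <- E by lia. apply HN. lia.
Qed.

Lemma lo_ext (u v w : nat -> R) :
  (forall n, u n = v n) -> little_o u w -> little_o v w.
Proof. intros E. apply lo_ext_ev. exists 0%nat. auto. Qed.

Lemma lo_plus (u v w : nat -> R) :
  little_o u w -> little_o v w -> little_o (fun n => u n + v n) w.
Proof.
  intros Hu Hv eps Heps.
  destruct (Hu (eps/2)) as [N1 H1]; [lra|].
  destruct (Hv (eps/2)) as [N2 H2]; [lra|].
  exists (max N1 N2). intros n Hn.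
  specialize (H1 n ltac:(lia)). specialize (H2 n ltac:(lia)).
  pose proof (Rabs_triang (u n) (v n)). lra.
Qed.

Lemma lo_sum (f : nat -> nat -> R) (w : nat -> R) (m : nat) :
  (forall i, (i <= m)%nat -> little_o (f i) w) ->
  little_o (fun n => sum_f_R0 (fun i => f i n) m) w.
Proof.
  induction m as [|m IH]; intros H; simpl.
  - apply H. lia.
  - apply lo_plus; [apply IH; intros; apply H|apply H]; lia.
Qed.

Lemma lo_mult_bounded (u w b : nat -> R) (M : R) :
  little_o u w -> (forall n, Rabs (b n) <= M) -> little_o (fun n => u n * b n) w.
Proof.
  intros H HM eps Heps.
  assert (HM1 : 0 < M + 1) by (pose proof (Rabs_pos (b 0%nat)); pose proof (HM 0%nat); lra).
  destruct (H (eps / (M + 1))) as [N HN]; [apply Rdiv_lt_0_compat; lra|].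
  exists N. intros n Hn. specialize (HN n Hn). specialize (HM n).
  rewrite Rabs_mult.
  replace (eps * Rabs (w n)) with (eps / (M + 1) * Rabs (w n) * (M + 1)) by (field; lra).
  apply Rmult_le_compat; auto using Rabs_pos; lra.
Qed.

Lemma lo_rescale (u v t w : nat -> R) (M : R) :
  little_o u v -> (forall n, v n = t n * w n) -> (forall n, Rabs (t n) <= M) ->
  little_o u w.
Proof.
  intros H Hv HM eps Heps.
  assert (HM1 : 0 < M + 1) by (pose proof (Rabs_pos (t 0%nat)); pose proof (HM 0%nat); lra).
  destruct (H (eps / (M + 1))) as [N HN]; [apply Rdiv_lt_0_compat; lra|].
  exists N. intros n Hn. specialize (HN n Hn). specialize (HM n).
  rewrite Hv, Rabs_mult in HN. eapply Rle_trans; [exact HN|].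
  replace (eps * Rabs (w n)) with (eps / (M + 1) * ((M + 1) * Rabs (w n))) by (field; lra).
  apply Rmult_le_compat_l; [apply Rlt_le, Rdiv_lt_0_compat; lra|].
  apply Rmult_le_compat_r; [apply Rabs_pos|lra].
Qed.

Lemma lo_of_cv0 (t w : nat -> R) : Un_cv t 0 -> little_o (fun n => t n * w n) w.
Proof.
  intros H eps Heps. destruct (H eps Heps) as [N HN]. exists N. intros n Hn.
  specialize (HN n Hn). unfold R_dist in HN. rewrite Rminus_0_r in HN.
  rewrite Rabs_mult. apply Rmult_le_compat_r; [apply Rabs_pos|lra].
Qed.

Lemma lo_cv0 (u v : nat -> R) : little_o u v -> Un_cv v 0 -> Un_cv u 0.
Proof.
  intros H Hv eps Heps.
  destruct (H 1 Rlt_0_1) as [N1 H1]. destruct (Hv eps Heps) as [N2 H2].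
  exists (max N1 N2). intros n Hn.
  specialize (H1 n ltac:(lia)). specialize (H2 n ltac:(lia)).
  unfold R_dist in *. rewrite Rminus_0_r in *. lra.
Qed.

Lemma lo_ratio_cv0 (g D : nat -> R) :
  little_o g D -> (forall n, 0 < D n) -> Un_cv (fun n => g n / D n) 0.
Proof.
  intros H HD eps Heps. destruct (H (eps/2)) as [N HN]; [lra|].
  exists N. intros n Hn. specialize (HN n Hn). specialize (HD n).
  unfold R_dist. rewrite Rminus_0_r.
  unfold Rdiv. rewrite Rabs_mult, Rabs_inv, (Rabs_pos_eq (D n)) by lra.
  rewrite (Rabs_pos_eq (D n)) in HN by lra.
  apply (Rmult_le_compat_r (/ D n)) in HN; [|apply Rlt_le, Rinv_0_lt_compat; lra].
  replace (eps / 2 * D n * / D n) with (eps/2) in HN by (field; lra). lra.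
Qed.

Lemma lo_inv_one_plus_sub1 (e D : nat -> R) :
  little_o e D -> Un_cv D 0 -> little_o (fun n => / (1 + e n) - 1) D.
Proof.
  intros He HD.
  assert (He0 : Un_cv e 0) by (eapply lo_cv0; eauto).
  apply lo_ext_ev with (fun n => e n * (- / (1 + e n))).
  - destruct (He0 (1/2)) as [N HN]; [lra|]. exists N. intros n Hn.
    specialize (HN n Hn). unfold R_dist in HN. rewrite Rminus_0_r in HN.
    pose proof (Rle_abs (- e n)). rewrite Rabs_Ropp in *. field. lra.
  - assert (Hcv : Un_cv (fun n => - / (1 + e n)) (- 1))
      by (apply (CV_opp (fun n => / (1 + e n))), cv_inv_one_plus, He0).
    destruct (cv_bounded _ _ Hcv) as [M HM].
    exact (lo_mult_bounded _ _ _ M He HM).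
Qed.

(** Polynomial expansions in j with a small parameter D *)

Section Expansions.

Variable D : nat -> R.
Variable d : nat.

Record has_expansion (m : nat) (F K : nat -> nat -> R) (l : nat -> R) : Prop := {
  exp_support : forall r, (m < r)%nat -> forall n, K r n = 0;
  exp_coef_cv : forall r, Un_cv (K r) (l r);
  exp_remainder : forall j, (1 <= j <= d)%nat ->
    little_o (fun n => F n j - expansion K D m n j) (fun n => D n ^ d) }.

Lemma has_expansion_ext m F G K l l' :
  has_expansion m F K l ->
  (forall n j, (1 <= j <= d)%nat -> F n j = G n j) -> (forall r, l r = l' r) ->
  has_expansion m G K l'.
Proof.
  intros [Hsupp Hcv Hrem] EF El. split; auto.
  - intros r. rewrite <- El. auto.
  - intros j Hj. eapply lo_ext; [|exact (Hrem j Hj)].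
    intros n. cbv beta. now rewrite EF.
Qed.

Lemma expansion_pad K m m' n j :
  (m <= m')%nat -> (forall r, (m < r)%nat -> K r n = 0) ->
  expansion K D m' n j = expansion K D m n j.
Proof.
  intros Hm Hz. induction Hm as [|m' Hm IH]; auto.
  unfold expansion in *. simpl. rewrite IH, Hz by lia. ring.
Qed.

Lemma has_expansion_pad m m' F K l :
  (m <= m')%nat -> has_expansion m F K l -> has_expansion m' F K l.
Proof.
  intros Hm [Hsupp Hcv Hrem]. split; auto.
  - intros r Hr. apply Hsupp. lia.
  - intros j Hj. eapply lo_ext; [|exact (Hrem j Hj)].
    intros n. cbv beta. now rewrite (expansion_pad K m m') by auto.
Qed.

Lemma has_expansion_plus m F G K L k l :
  has_expansion m F K k -> has_expansion m G L l ->
  has_expansion m (fun n j => F n j + G n j) (fun r n => K r n + L r n)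
    (fun r => k r + l r).
Proof.
  intros [HsK HcK HrK] [HsL HcL HrL]. split.
  - intros r Hr n. rewrite HsK, HsL by auto. ring.
  - intros r. now apply CV_plus.
  - intros j Hj. eapply lo_ext; [|exact (lo_plus _ _ _ (HrK j Hj) (HrL j Hj))].
    intros n. cbv beta. unfold expansion.
    replace (sum_f_R0 (fun r => (K r n + L r n) * D n ^ r * INR j ^ r) m) with
      (sum_f_R0 (fun r => K r n * D n ^ r * INR j ^ r + L r n * D n ^ r * INR j ^ r) m)
      by (apply sum_eq; intros; ring).
    rewrite plus_sum. ring.
Qed.

(* Coefficients of the product of sum_r K_r D^r j^r with a(n) + b(n) D(n) j. *)
Definition shift_coef (a b : nat -> R) (K : nat -> nat -> R) (r n : nat) : R :=
  a n * K r n + match r with O => 0 | S r' => b n * K r' n end.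

Lemma expansion_shift a b K m n j :
  expansion (shift_coef a b K) D (S m) n j =
  a n * expansion K D (S m) n j + b n * D n * INR j * expansion K D m n j.
Proof.
  unfold expansion, shift_coef. induction m as [|m IH].
  - simpl. ring.
  - change (sum_f_R0 ?f (S (S m))) with (sum_f_R0 f (S m) + f (S (S m))).
    rewrite IH. simpl. ring.
Qed.

Hypothesis D_cv0 : Un_cv D 0.

(* Multiplying by a linear factor a(n) + b(n) D(n) j with a -> a0, b -> b0 raises
   the degree by one; the remainder stays o(D^d) because the factor is bounded. *)
Lemma has_expansion_mul_linear m F K l a b a0 b0 :
  has_expansion m F K l -> Un_cv a a0 -> Un_cv b b0 ->
  has_expansion (S m) (fun n j => F n j * (a n + b n * D n * INR j)) (shift_coef a b K)
    (fun r => a0 * l r + match r with O => 0 | S r' => b0 * l r' end).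
Proof.
  intros [Hsupp Hcv Hrem] Ha Hb. split.
  - intros r Hr n. unfold shift_coef. destruct r as [|r]; [lia|].
    rewrite !Hsupp by lia. ring.
  - intros [|r]; unfold shift_coef; apply CV_plus; try apply CV_mult; auto using cv_const.
  - intros j Hj.
    assert (Hfac : Un_cv (fun n => a n + b n * D n * INR j) (a0 + b0 * 0 * INR j))
      by (apply CV_plus; [|apply CV_mult; [apply CV_mult|apply cv_const]]; auto).
    destruct (cv_bounded _ _ Hfac) as [M HM].
    eapply lo_ext; [|exact (lo_mult_bounded _ _ _ M (Hrem j Hj) HM)].
    intros n. cbv beta. rewrite expansion_shift.
    unfold expansion at 2. simpl. fold (expansion K D m n j). rewrite Hsupp by lia. ring.
Qed.

(* Terms of degree r > d are themselves o(D^d), so any expansion of degree m >= d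
   can be truncated to degree d. *)
Lemma has_expansion_truncate m F K l :
  (d <= m)%nat -> has_expansion m F K l ->
  forall j, (1 <= j <= d)%nat ->
  little_o (fun n => F n j - expansion K D d n j) (fun n => D n ^ d).
Proof.
  intros Hdm [Hsupp Hcv Hrem] j Hj.
  destruct (Nat.eq_dec d m) as [<-|Hne]; [exact (Hrem j Hj)|].
  set (high := fun i n => K (S d + i)%nat n * D n ^ (S d + i) * INR j ^ (S d + i)).
  assert (Hhigh : forall i, little_o (high i) (fun n => D n ^ d)).
  { intros i. eapply lo_ext;
      [|apply lo_of_cv0 with (t := fun n => K (S d + i)%nat n * D n ^ S i * INR j ^ (S d + i))].
    - intros n. unfold high. replace (S d + i)%nat with (d + S i)%nat by lia.
      rewrite (pow_add (D n)). ring.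
    - apply cv_lim_eq with (l (S d + i)%nat * 0 ^ S i * INR j ^ (S d + i)); [simpl; ring|].
      apply CV_mult; [apply CV_mult|apply cv_const]; auto using cv_pow. }
  eapply lo_ext;
    [|exact (lo_plus _ _ _ (Hrem j Hj) (lo_sum high _ (m - S d) (fun i _ => Hhigh i)))].
  intros n. cbv beta. unfold expansion. rewrite (tech2 _ d m) by lia. unfold high. ring.
Qed.

End Expansions.

Lemma has_expansion_rescale (delta D u : nat -> R) (d m : nat) F K l :
  (forall n, delta n = u n * D n) -> Un_cv u 1 ->
  has_expansion delta d m F K l ->
  has_expansion D d m F (fun r n => K r n * u n ^ r) l.
Proof.
  intros Hdu Hu [Hsupp Hcv Hrem]. split.
  - intros r Hr n. rewrite Hsupp by auto. ring.
  - intros r. apply cv_lim_eq with (l r * 1 ^ r); [rewrite pow1; ring|].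
    apply CV_mult; auto using cv_pow.
  - intros j Hj. destruct (cv_bounded _ _ (cv_pow _ _ d Hu)) as [M HM].
    apply (lo_rescale _ (fun n => delta n ^ d) (fun n => u n ^ d) _ M); auto.
    + eapply lo_ext; [|exact (Hrem j Hj)].
      intros n. cbv beta. unfold expansion. f_equal. apply sum_eq.
      intros r _. rewrite Hdu, Rpow_mult_distr. ring.
    + intros n. now rewrite Hdu, Rpow_mult_distr.
Qed.

(* The hypothesis of the proposition is an expansion of degree d, once the
   coefficients beyond d are set to zero. *)
Definition truncate_coef (d : nat) (C : nat -> nat -> R) (r n : nat) : R :=
  if (r <=? d)%nat then C r n else 0.

Definition truncate_lim (d : nat) (c : nat -> R) (r : nat) : R :=
  if (r <=? d)%nat then c r else 0.

Lemma has_expansion_intro (D : nat -> R) (d : nat) F C c :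
  (forall r, (r <= d)%nat -> Un_cv (C r) (c r)) ->
  (forall j, (1 <= j <= d)%nat ->
     little_o (fun n => F n j - expansion C D d n j) (fun n => D n ^ d)) ->
  has_expansion D d d F (truncate_coef d C) (truncate_lim d c).
Proof.
  intros Hcv Hrem. split.
  - intros r Hr n. unfold truncate_coef. destruct (Nat.leb_spec r d); [lia|auto].
  - intros r. unfold truncate_coef, truncate_lim.
    destruct (Nat.leb_spec r d); auto using cv_const.
  - intros j Hj. eapply lo_ext; [|exact (Hrem j Hj)].
    intros n. cbv beta. unfold expansion. f_equal. apply sum_eq.
    intros r Hr. unfold truncate_coef. destruct (Nat.leb_spec r d); [auto|lia].
Qed.

(** Binomial coefficients as polynomials in j *)

Fixpoint binom_poly (k j : nat) : R :=
  match k with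
  | O => 1
  | S k' => binom_poly k' j * (INR j - INR k') / INR (S k')
  end.

Lemma binom_poly_C k j : (k <= j)%nat -> binom_poly k j = C j k.
Proof.
  induction k as [|k IH]; intros Hkj.
  - unfold binom_poly, C. rewrite Nat.sub_0_r. simpl. field. apply INR_fact_neq_0.
  - change (binom_poly (S k) j) with (binom_poly k j * (INR j - INR k) / INR (S k)).
    rewrite pascal_step3, IH, minus_INR by lia.
    field. apply not_0_INR. lia.
Qed.

Lemma binom_poly_zero k j : (j < k)%nat -> binom_poly k j = 0.
Proof.
  induction k as [|k IH]; intros Hjk; [lia|].
  change (binom_poly (S k) j) with (binom_poly k j * (INR j - INR k) / INR (S k)).
  destruct (Nat.eq_dec j k) as [->|Hne].
  - unfold Rdiv. rewrite Rminus_diag. ring.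
  - rewrite IH by lia. unfold Rdiv. ring.
Qed.

Lemma sum_binom_poly x j m :
  (j <= m)%nat -> sum_f_R0 (fun i => binom_poly i j * x ^ i) m = (1 + x) ^ j.
Proof.
  intros Hjm.
  assert (Hj : sum_f_R0 (fun i => binom_poly i j * x ^ i) j = (1 + x) ^ j).
  { rewrite Rplus_comm, binomial. apply sum_eq. intros i Hi.
    rewrite binom_poly_C, pow1 by lia. ring. }
  destruct (Nat.eq_dec j m) as [<-|Hne]; auto.
  rewrite (tech2 _ j m), Hj by lia.
  rewrite (sum_eq _ (fun _ => 0)), sum_cte; [ring|].
  intros i _. rewrite binom_poly_zero by lia. ring.
Qed.

(** Multiplication by (1 + g)^j with g = o(D) *)

Section BinomialFactor.

Variables (D g : nat -> R) (d : nat) (F : nat -> nat -> R).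
Hypothesis D_pos : forall n, 0 < D n.
Hypothesis D_cv0 : Un_cv D 0.
Hypothesis g_small : little_o g D.

(* Q_{k+1}(j) g^{k+1} = Q_k(j) g^k (a + b D j) with a = -g k/(k+1) and
   b = (g/D)/(k+1), both tending to 0: each step gives vanishing coefficients. *)
Lemma binom_term_step m K l k :
  has_expansion D d m (fun n j => F n j * binom_poly k j * g n ^ k) K l ->
  exists K', has_expansion D d (S m)
    (fun n j => F n j * binom_poly (S k) j * g n ^ S k) K' (fun _ => 0).
Proof.
  intros HK.
  assert (Hg0 : Un_cv g 0) by (eapply lo_cv0; eauto).
  assert (HgD : Un_cv (fun n => g n / D n) 0) by (apply lo_ratio_cv0; auto).
  set (a := fun n => g n * (- INR k / INR (S k))).
  set (b := fun n => g n / D n * / INR (S k)).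
  assert (Ha : Un_cv a 0).
  { apply cv_lim_eq with (0 * (- INR k / INR (S k))); [ring|].
    apply CV_mult; auto using cv_const. }
  assert (Hb : Un_cv b 0).
  { apply cv_lim_eq with (0 * / INR (S k)); [ring|].
    apply CV_mult; auto using cv_const. }
  exists (shift_coef a b K).
  eapply has_expansion_ext; [exact (has_expansion_mul_linear D d D_cv0 m _ K l a b 0 0 HK Ha Hb)| |].
  - intros n j _. unfold a, b.
    change (binom_poly (S k) j) with (binom_poly k j * (INR j - INR k) / INR (S k)).
    rewrite <- tech_pow_Rmult.
    field. split; [apply not_0_INR; lia|]. specialize (D_pos n). lra.
  - intros [|r]; ring.
Qed.

Lemma binom_term m K l i :
  has_expansion D d m F K l ->
  exists K', has_expansion D d (m + S i)
    (fun n j => F n j * binom_poly (S i) j * g n ^ S i) K' (fun _ => 0).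
Proof.
  intros HK. induction i as [|i [K' IH]].
  - rewrite Nat.add_1_r. apply (binom_term_step m K l 0).
    eapply has_expansion_ext; [exact HK| |reflexivity]. intros n j _. simpl. ring.
  - rewrite Nat.add_succ_r. exact (binom_term_step _ _ _ _ IH).
Qed.

Lemma binom_partial_sum m K l k :
  has_expansion D d m F K l ->
  exists K', has_expansion D d (m + k)
    (fun n j => sum_f_R0 (fun i => F n j * binom_poly i j * g n ^ i) k) K' l.
Proof.
  intros HK. induction k as [|k [K' IH]].
  - exists K. rewrite Nat.add_0_r.
    eapply has_expansion_ext; [exact HK| |reflexivity]. intros n j _. simpl. ring.
  - destruct (binom_term m K l k HK) as [L HL].
    apply (has_expansion_pad D d _ (m + S k)) in IH; [|lia].
    eexists. eapply has_expansion_ext; [exact (has_expansion_plus D d _ _ _ _ _ _ _ IH HL)| |].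
    + intros n j _. reflexivity.
    + intros r. cbv beta. ring.
Qed.

Lemma has_expansion_mul_pow m K l :
  has_expansion D d m F K l ->
  exists K', has_expansion D d (m + d) (fun n j => F n j * (1 + g n) ^ j) K' l.
Proof.
  intros HK. destruct (binom_partial_sum m K l d HK) as [K' HK'].
  exists K'. eapply has_expansion_ext; [exact HK'| |reflexivity].
  intros n j Hj. cbv beta.
  rewrite (sum_eq _ (fun i => binom_poly i j * g n ^ i * F n j)) by (intros; ring).
  rewrite <- scal_sum, sum_binom_poly by lia. ring.
Qed.

End BinomialFactor.

Theorem proposition4p4
  (alpha Rn delta Rs deltas : nat -> R) (d : nat)
  (C : nat -> nat -> R) (c : nat -> R) :
  (forall n, 0 < alpha n) ->
  (0 < d)%nat ->
  (forall n, 0 < delta n) ->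
  Un_cv delta 0 ->
  (forall r, (r <= d)%nat -> Un_cv (C r) (c r)) ->
  (forall j, (1 <= j <= d)%nat ->
     little_o
       (fun n => alpha (n + j)%nat / (alpha n * Rn n ^ j) - expansion C delta d n j)
       (fun n => delta n ^ d)) ->
  (forall n, 0 < deltas n) ->
  (exists e : nat -> R, little_o e delta /\ forall n, Rs n = Rn n * (1 + e n)) ->
  (exists f : nat -> R, Un_cv f 0 /\ forall n, deltas n = delta n * (1 + f n)) ->
  exists Cs : nat -> nat -> R,
    (forall r, (r <= d)%nat -> Un_cv (Cs r) (c r)) /\
    (forall j, (1 <= j <= d)%nat ->
       little_o
         (fun n => alpha (n + j)%nat / (alpha n * Rs n ^ j) - expansion Cs deltas d n j)
         (fun n => deltas n ^ d)).
Proof.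
  intros _ _ Hdelta Hdelta0 HC Hexp Hdeltas [e [He HRs]] [f [Hf Hdf]].
  (* delta = u deltas with u = 1/(1+f) -> 1, hence deltas -> 0 and e = o(deltas) *)
  set (u := fun n => / (1 + f n)).
  assert (Hdu : forall n, delta n = u n * deltas n).
  { intros n. unfold u. rewrite Hdf. specialize (Hdelta n). specialize (Hdeltas n).
    rewrite Hdf in Hdeltas. field. nra. }
  assert (Hu : Un_cv u 1) by (apply cv_inv_one_plus, Hf).
  assert (Hdeltas0 : Un_cv deltas 0).
  { apply cv_ext with (fun n => delta n * (1 + f n)); [intros; now rewrite Hdf|].
    apply cv_lim_eq with (0 * (1 + 0)); [ring|].
    apply CV_mult, CV_plus; auto using cv_const. }
  assert (He' : little_o e deltas).
  { destruct (cv_bounded _ _ Hu) as [M HM].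
    exact (lo_rescale _ _ _ _ M He Hdu HM). }
  (* the old expansion, rescaled to deltas, multiplied by (1 + g)^j *)
  set (g := fun n => / (1 + e n) - 1).
  assert (Hg : little_o g deltas) by (apply lo_inv_one_plus_sub1; auto).
  set (A := fun n j => alpha (n + j)%nat / (alpha n * Rn n ^ j)).
  pose proof (has_expansion_rescale delta deltas u d d A _ _ Hdu Hu
                (has_expansion_intro delta d A C c HC Hexp)) as HA.
  destruct (has_expansion_mul_pow deltas g d A Hdeltas Hdeltas0 Hg d _ _ HA) as [K HK].
  exists K. split.
  - intros r Hr. pose proof (exp_coef_cv _ _ _ _ _ _ HK r) as HKr.
    unfold truncate_lim in HKr. destruct (Nat.leb_spec r d); [auto|lia].
  - intros j Hj. eapply lo_ext; [|exact (has_expansion_truncate deltas d Hdeltas0 (d + d) _ _ _ ltac:(lia) HK j Hj)].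
    intros n. cbv beta. f_equal. unfold A, g. rewrite HRs, Rpow_mult_distr.
    replace (1 + (/ (1 + e n) - 1)) with (/ (1 + e n)) by ring.
    rewrite pow_inv. unfold Rdiv. rewrite !Rinv_mult. ring.
Qed.
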